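(* Let $\mathscr{C}=\left\{\sum_{i=1}^{\infty} t_i 3^{-i} : t_i\in\{0,2\}\right\}$ be the middle-third Cantor set. Then \[\left[\left(\tfrac{8}{9}\right)^{3},\tfrac{8}{9}\right]\subseteq \mathscr{C}\cdot\mathscr{C}\cdot\mathscr{C}\cdot\mathscr{C}=\{abcd : a,b,c,d\in\mathscr{C}\}.\] *)

From Stdlib Require Import Reals.
Open Scope R_scope.

(* Middle-third Cantor set: x = sum_{i>=1} t_i 3^{-i}, t_i in {0,2}.
   Indices shifted: t : nat -> R, term i (i >= 0) is t i / 3^(i+1). *)
Definition cantor (x : R) : Prop :=
  exists t : nat -> R,
    (forall i, t i = 0 \/ t i = 2) /\
    infinite_sum (fun i => t i / 3 ^ (S i)) x.

From Stdlib Require Import Reals Lra Psatz.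
Open Scope R_scope.

(* Every x in [(2/3)^3, 1], an interval containing [(8/9)^3, 8/9], is already
   a product abc of three points of C ∩ [2/3, 1]; the fourth factor is 1 ∈ C.
   The factors are built one ternary digit at a time.  At stage m each factor
   is confined to a triadic interval [l, l + 3^-(m+1)] of the Cantor
   construction, and x lies between the product of the lower endpoints and the
   product of the upper endpoints.  Replacing the interval of one factor by its
   lower or its upper third splits this range of products into two pieces,
   which overlap because the factors are at least 2/3: the middle-third gap is
   bridged by the spread of the cofactor.  So one of the two choices keeps x in
   range, and the limits of the three nested sequences multiply to x. *)

Lemma pow_inv3_pos n : 0 < (/3) ^ n.
Proof. apply pow_lt; lra. Qed.

Lemma pow_inv3_S n : (/3) ^ S n = (/3) ^ n / 3.
Proof. simpl; field. Qed.

Lemma eq_of_dist_le_geom (C q x y : R) : Rabs q < 1 ->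
  (forall n, Rabs (x - y) <= C * q ^ n) -> x = y.
Proof.
  intros Hq Hdist. apply cond_eq. intros eps Heps.
  destruct (Rle_lt_dec C 0) as [HC | HC].
  - specialize (Hdist 0%nat); simpl in Hdist; lra.
  - destruct (pow_lt_1_zero q Hq (eps / C)) as [N HN].
    { apply Rdiv_lt_0_compat; lra. }
    specialize (HN N (le_n N)). specialize (Hdist N).
    pose proof (Rle_abs (q ^ N)).
    apply Rlt_le_trans with (C * (eps / C)); [nra | right; field; lra].
Qed.

Lemma Un_cv_le_ub (u : nat -> R) (l M : R) :
  Un_cv u l -> (forall n, u n <= M) -> l <= M.
Proof.
  intros Hu HM. apply (Rle_cv_lim HM Hu).
  intros eps Heps. exists 0%nat. intros n _. rewrite Rdist_eq. exact Heps.
Qed.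

Section TernarySeries.

Variable t : nat -> R.
Hypothesis t_digits : forall i, t i = 0 \/ t i = 2.

Lemma ternary_term_bounds i : 0 <= t i / 3 ^ S i <= 2 * (/3) ^ S i.
Proof.
  unfold Rdiv. rewrite <- pow_inv. pose proof (pow_inv3_pos (S i)).
  destruct (t_digits i) as [-> | ->]; lra.
Qed.

Lemma ternary_partial_sum_tail m k :
  sum_f_R0 (fun i => t i / 3 ^ S i) (k + m)
  <= sum_f_R0 (fun i => t i / 3 ^ S i) m + (/3) ^ S m - (/3) ^ S (k + m).
Proof.
  induction k as [|k IH]; [simpl; lra|].
  rewrite Nat.add_succ_l. cbn [sum_f_R0].
  pose proof (ternary_term_bounds (S (k + m))).
  rewrite (pow_inv3_S (S (k + m))) in *. lra.
Qed.

Lemma ternary_series_sum : exists a,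
  infinite_sum (fun i => t i / 3 ^ S i) a /\
  forall m, sum_f_R0 (fun i => t i / 3 ^ S i) m <= a
            <= sum_f_R0 (fun i => t i / 3 ^ S i) m + (/3) ^ S m.
Proof.
  set (u := sum_f_R0 (fun i => t i / 3 ^ S i)).
  assert (Hgrow : Un_growing u).
  { intro n. unfold u. cbn [sum_f_R0]. pose proof (ternary_term_bounds (S n)). lra. }
  assert (Htail : forall m n, u (n + m)%nat <= u m + (/3) ^ S m).
  { intros m n. pose proof (ternary_partial_sum_tail m n).
    pose proof (pow_inv3_pos (S (n + m))). unfold u. lra. }
  assert (Hub : has_ub u).
  { exists (u 0%nat + /3 ^ 1). intros r [n ->].
    rewrite <- (Nat.add_0_r n), <- pow_inv. apply Htail. }
  destruct (growing_cv u Hgrow Hub) as [a Ha].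
  exists a. split; [exact Ha|].
  intro m. split.
  - exact (growing_ineq u a Hgrow Ha m).
  - exact (Un_cv_le_ub _ a _ (CV_shift' u m a Ha) (Htail m)).
Qed.

End TernarySeries.

Lemma cantor_1 : cantor 1.
Proof.
  exists (fun _ => 2). split; [auto|].
  destruct (ternary_series_sum (fun _ => 2)) as [a [Ha Hbounds]]; [auto|].
  replace 1 with a; [exact Ha|].
  assert (Hpartial : forall m, sum_f_R0 (fun i => 2 / 3 ^ S i) m = 1 - (/3) ^ S m).
  { induction m as [|m IH]; cbn [sum_f_R0]; [simpl; field|].
    rewrite IH, (pow_inv3_S (S m)), pow_inv. simpl. field. apply pow_nonzero. lra. }
  apply (eq_of_dist_le_geom (/3) (/3)); [rewrite Rabs_pos_eq; lra|].
  intro n. specialize (Hbounds n). rewrite Hpartial in Hbounds.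
  apply Rabs_le. simpl in *. lra.
Qed.

Definition ternary_step (l l' s : R) : Prop := l' = l \/ l' = l + 2 * s / 3.

Lemma cantor_of_ternary_path (L : nat -> R) :
  (L 0%nat = 0 \/ L 0%nat = 2 / 3) ->
  (forall m, ternary_step (L m) (L (S m)) ((/3) ^ S m)) ->
  exists a, cantor a /\ forall m, L m <= a <= L m + (/3) ^ S m.
Proof.
  intros H0 Hstep.
  set (t i := match i with
              | O => L 0%nat * 3
              | S k => (L (S k) - L k) * 3 ^ S (S k)
              end).
  assert (Hpow : forall n, 3 ^ n <> 0) by (intro; apply pow_nonzero; lra).
  assert (Ht : forall i, t i = 0 \/ t i = 2).
  { intros [|k]; simpl t.
    - destruct H0 as [-> | ->]; lra.
    - destruct (Hstep k) as [-> | ->]; [left; ring | right].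
      rewrite pow_inv. simpl. field. apply Hpow. }
  assert (Hpartial : forall m, sum_f_R0 (fun i => t i / 3 ^ S i) m = L m).
  { induction m as [|m IH]; cbn [sum_f_R0]; simpl t.
    - simpl. field.
    - rewrite IH. simpl. field. apply Hpow. }
  destruct (ternary_series_sum t Ht) as [a [Ha Hbounds]].
  exists a. split; [exists t; auto|].
  intro m. rewrite <- Hpartial. apply Hbounds.
Qed.

(* [[l, l + s]] is the current interval of one factor and [B] the largest value
   of the product of the other two; the result is the left end of the third of
   [[l, l + s]] that is kept. *)
Definition refine (x l s B : R) : R :=
  if Rle_dec x ((l + s / 3) * B) then l else l + 2 * s / 3.

Lemma refine_step x l s B : ternary_step l (refine x l s B) s.
Proof. unfold ternary_step, refine; destruct Rle_dec; auto. Qed.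

Lemma refine_spec x l s A B :
  l * A <= x <= (l + s) * B -> (l + 2 * s / 3) * A <= (l + s / 3) * B ->
  refine x l s B * A <= x <= (refine x l s B + s / 3) * B.
Proof. unfold refine; destruct Rle_dec; intros; split; nra. Qed.

Lemma thirds_overlap a b c s sb sc :
  0 <= s -> s / 3 <= sb -> s / 3 <= sc -> 1 / 2 <= a -> 0 <= b <= 1 -> 0 <= c <= 1 ->
  (a + 2 * s / 3) * (b * c) <= (a + s / 3) * ((b + sb) * (c + sc)).
Proof.
  intros Hs Hsb Hsc Ha Hb Hc.
  assert (Hgrow : b * c + s / 3 * (b + c) <= (b + sb) * (c + sc)) by nra.
  assert (Hmean : b * c <= (b + c) / 2) by nra.
  assert (Hpos : 0 <= s / 3 * (b + c)) by nra.
  nra.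
Qed.

Lemma refine_coord x l s b c sb sc :
  0 < s -> s / 3 <= sb -> s / 3 <= sc -> 2 / 3 <= l -> 0 <= b <= 1 -> 0 <= c <= 1 ->
  l * (b * c) <= x <= (l + s) * ((b + sb) * (c + sc)) ->
  let l' := refine x l s ((b + sb) * (c + sc)) in
  l <= l' /\ l' + s / 3 <= l + s /\
  l' * (b * c) <= x <= (l' + s / 3) * ((b + sb) * (c + sc)).
Proof.
  intros Hs Hsb Hsc Hl Hb Hc Hx. cbv zeta.
  pose proof (refine_step x l s ((b + sb) * (c + sc))) as Hstep.
  split; [|split]; [destruct Hstep as [-> | ->]; lra .. |].
  apply refine_spec; [exact Hx | apply thirds_overlap; lra].
Qed.

Definition bracket (x s : R) (l : R * R * R) : Prop :=
  let '(l1, l2, l3) := l in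
  2 / 3 <= l1 /\ 2 / 3 <= l2 /\ 2 / 3 <= l3 /\
  l1 + s <= 1 /\ l2 + s <= 1 /\ l3 + s <= 1 /\
  l1 * l2 * l3 <= x <= (l1 + s) * (l2 + s) * (l3 + s).

Definition refine3 (x s : R) (l : R * R * R) : R * R * R :=
  let '(l1, l2, l3) := l in
  let l1' := refine x l1 s ((l2 + s) * (l3 + s)) in
  let l2' := refine x l2 s ((l1' + s / 3) * (l3 + s)) in
  (l1', l2', refine x l3 s ((l1' + s / 3) * (l2' + s / 3))).

Lemma bracket_refine3 x s l : 0 < s -> bracket x s l -> bracket x (s / 3) (refine3 x s l).
Proof.
  destruct l as [[l1 l2] l3]. cbn.
  intros Hs (H1 & H2 & H3 & U1 & U2 & U3 & Lo & Hi).
  destruct (refine_coord x l1 s l2 l3 s s) as (R1 & R1' & A1); [lra.. |].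
  set (l1' := refine x l1 s ((l2 + s) * (l3 + s))) in *.
  destruct (refine_coord x l2 s l1' l3 (s / 3) s) as (R2 & R2' & A2); [lra.. |].
  set (l2' := refine x l2 s ((l1' + s / 3) * (l3 + s))) in *.
  destruct (refine_coord x l3 s l1' l2' (s / 3) (s / 3)) as (R3 & R3' & A3); [lra.. |].
  repeat split; lra.
Qed.

Fixpoint approx (x : R) (m : nat) : R * R * R :=
  match m with
  | O => (2 / 3, 2 / 3, 2 / 3)
  | S k => refine3 x ((/3) ^ S k) (approx x k)
  end.

Definition approx1 x m := fst (fst (approx x m)).
Definition approx2 x m := snd (fst (approx x m)).
Definition approx3 x m := snd (approx x m).

Lemma bracket_approx x m : (2 / 3) ^ 3 <= x <= 1 -> bracket x ((/3) ^ S m) (approx x m).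
Proof.
  intros Hx. induction m as [|m IH]; [cbn in *; lra|].
  cbn [approx]. rewrite (pow_inv3_S (S m)).
  apply bracket_refine3; [apply pow_inv3_pos | exact IH].
Qed.

Lemma approx_steps x m :
  ternary_step (approx1 x m) (approx1 x (S m)) ((/3) ^ S m) /\
  ternary_step (approx2 x m) (approx2 x (S m)) ((/3) ^ S m) /\
  ternary_step (approx3 x m) (approx3 x (S m)) ((/3) ^ S m).
Proof.
  unfold approx1, approx2, approx3. cbn [approx].
  destruct (approx x m) as [[l1 l2] l3]. cbn.
  split; [|split]; apply refine_step.
Qed.

Lemma bracket_prod_dist x s l1 l2 l3 a b c : 0 <= s ->
  bracket x s (l1, l2, l3) ->
  l1 <= a <= l1 + s -> l2 <= b <= l2 + s -> l3 <= c <= l3 + s ->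
  Rabs (x - a * b * c) <= 3 * s.
Proof.
  cbn. intros Hs (H1 & H2 & H3 & U1 & U2 & U3 & Lo & Hi) Ha Hb Hc.
  assert (Pab : l1 * l2 <= a * b <= (l1 + s) * (l2 + s)) by (split; apply Rmult_le_compat; lra).
  assert (Pabc : l1 * l2 * l3 <= a * b * c <= (l1 + s) * (l2 + s) * (l3 + s))
    by (split; apply Rmult_le_compat; nra).
  assert (Width : (l1 + s) * (l2 + s) * (l3 + s) - l1 * l2 * l3 <= 3 * s).
  { replace ((l1 + s) * (l2 + s) * (l3 + s) - l1 * l2 * l3)
      with (s * ((l2 + s) * (l3 + s)) + s * (l1 * (l3 + s)) + s * (l1 * l2)) by ring.
    assert ((l2 + s) * (l3 + s) <= 1) by nra.
    assert (l1 * (l3 + s) <= 1) by nra.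
    assert (l1 * l2 <= 1) by nra.
    nra. }
  apply Rabs_le. lra.
Qed.

Theorem cantor_cube_cover x : (2 / 3) ^ 3 <= x <= 1 ->
  exists a b c, cantor a /\ cantor b /\ cantor c /\ x = a * b * c.
Proof.
  intros Hx.
  destruct (cantor_of_ternary_path (approx1 x)) as [a [Ca Ba]];
    [right; reflexivity | intro m; apply (approx_steps x m) |].
  destruct (cantor_of_ternary_path (approx2 x)) as [b [Cb Bb]];
    [right; reflexivity | intro m; apply (approx_steps x m) |].
  destruct (cantor_of_ternary_path (approx3 x)) as [c [Cc Bc]];
    [right; reflexivity | intro m; apply (approx_steps x m) |].
  exists a, b, c. repeat split; try assumption.
  apply (eq_of_dist_le_geom 1 (/3)); [rewrite Rabs_pos_eq; lra|].
  intro m. replace (1 * (/3) ^ m) with (3 * (/3) ^ S m) by (simpl; field).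
  pose proof (bracket_approx x m Hx) as Hbracket.
  specialize (Ba m); specialize (Bb m); specialize (Bc m).
  unfold approx1, approx2, approx3 in *. destruct (approx x m) as [[l1 l2] l3].
  eapply bracket_prod_dist; [apply Rlt_le, pow_inv3_pos | eassumption ..].
Qed.

Theorem theorem2 :
  forall x : R, (8/9)^3 <= x <= 8/9 ->
    exists a b c d : R,
      cantor a /\ cantor b /\ cantor c /\ cantor d /\ x = a * b * c * d.
Proof.
  intros x Hx.
  destruct (cantor_cube_cover x) as (a & b & c & Ca & Cb & Cc & E); [simpl in *; lra|].
  exists a, b, c, 1. repeat split; try assumption; [apply cantor_1 | lra].
Qed.
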